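(* Let $\mathfrak S$ be a commutative semiring with identity and let $\sigma_{\mathfrak S}$ be a set of ideals of $\mathfrak S$ containing all maximal ideals of $\mathfrak S$. Then the Iséki space $\sigma_{\mathfrak S}$ (i.e. $\sigma_{\mathfrak S}$ with the ideal topology) is quasi-compact.
   Context: A semiring $(\mathfrak S,+,0,\cdot,1)$ has $(\mathfrak S,+,0)$ a commutative monoid, $(\mathfrak S,\cdot,1)$ a monoid, $0r=r0=0$, and two-sided distributivity; all semirings are commutative. An ideal of $\mathfrak S$ is a nonempty proper subset closed under addition and under multiplication by arbitrary elements of $\mathfrak S$; a maximal ideal is an ideal not properly contained in any other ideal. For an ideal $\mathfrak a$ put $\mathfrak a^{\uparrow}=\{\mathfrak x\in\sigma_{\mathfrak S}\mid \mathfrak a\subseteq\mathfrak x\}$. The ideal topology on $\sigma_{\mathfrak S}$ is the topology for which the sets $\mathfrak a^{\uparrow}$, $\mathfrak a$ ranging over ideals of $\mathfrak S$, form a subbasis of closed sets. Quasi-compact means every open cover has a finite subcover (no Hausdorff assumption). *)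

From HB Require Import structures.
From mathcomp Require Import all_boot all_order all_algebra.
From mathcomp Require Import boolp classical_sets.
Set Implicit Arguments. Unset Strict Implicit. Unset Printing Implicit Defensive.
Import GRing.Theory.
Local Open Scope classical_set_scope.
Local Open Scope ring_scope.

Section IsekiDefs.
Variable R : comPzSemiRingType.

Definition is_ideal (I : set R) : Prop :=
  (exists x, I x) /\ (exists x, ~ I x) /\
  (forall x y, I x -> I y -> I (x + y)) /\
  (forall r x, I x -> I (r * x)).

Definition is_maximal_ideal (M : set R) : Prop :=
  is_ideal M /\ forall J, is_ideal J -> M `<=` J -> J = M.

Variable sigma : set (set R).

Definition up_set (a : set R) : set (set R) := [set x | sigma x /\ a `<=` x].

(* The ideal topology on sigma: the sets a^up (a an ideal) form a subbasis of
   closed sets; equivalently the complements sigma \ a^up form a subbasis of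
   open sets.  Basic opens are finite intersections of subbasic opens (the
   empty intersection being the whole space sigma); opens are unions of basic
   opens. *)
Definition basic_open (U : set (set R)) : Prop :=
  exists (n : nat) (a : 'I_n -> set R),
    (forall i, is_ideal (a i)) /\
    U = [set x | sigma x /\ forall i, ~ (up_set (a i) x)].

Definition ideal_open (U : set (set R)) : Prop :=
  exists F : set (set (set R)), F `<=` basic_open /\ U = \bigcup_(B in F) B.

Definition iseki_quasi_compact : Prop :=
  forall (I : Type) (U : I -> set (set R)),
    (forall i, ideal_open (U i)) ->
    sigma `<=` \bigcup_(i in setT) U i ->
    exists (n : nat) (f : 'I_n -> I), sigma `<=` \bigcup_(k in setT) U (f k).

End IsekiDefs.

(* A maximal ideal M lies in a basic open set of some member of the cover,
   i.e. it contains none of finitely many ideals a_1, ..., a_n.  Choosing c_j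
   in a_j outside M, the product c of the c_j lies outside M (maximal ideals
   are prime), and every ideal of sigma not containing c contains none of the
   a_j.  The ideal generated by all such c is contained in no maximal ideal,
   so by Krull's lemma 1 = r_1 c_1 + ... + r_k c_k; an ideal of sigma cannot
   contain all of c_1, ..., c_k, so the k members of the cover attached to
   them cover sigma. *)
From HB Require Import structures.
From mathcomp Require Import all_boot all_order all_algebra.
From mathcomp Require Import boolp classical_sets.
Local Open Scope classical_set_scope.

Section Ideals.
Import GRing.Theory.
Local Open Scope ring_scope.
Context {R : comPzSemiRingType}.
Implicit Types (I J M : set R) (a b r x y : R).

Lemma ideal_add {I x y} : is_ideal I -> I x -> I y -> I (x + y).
Proof. by case=> _ [_ [+ _]]; apply. Qed.

Lemma ideal_mul {I} r {y} : is_ideal I -> I y -> I (r * y).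
Proof. by case=> _ [_ [_ +]]; apply. Qed.

Lemma ideal0 {I} : is_ideal I -> I 0.
Proof. by move=> hI; have [[y Iy] _] := hI; rewrite -(mul0r y); exact: ideal_mul. Qed.

Lemma ideal_not1 {I} : is_ideal I -> ~ I 1.
Proof.
move=> hI I1; have [_ [[y Iy] _]] := hI.
by apply: Iy; rewrite -(mulr1 y); exact: ideal_mul.
Qed.

Lemma is_ideal_intro I : I 0 -> ~ I 1 ->
  (forall x y, I x -> I y -> I (x + y)) -> (forall r y, I y -> I (r * y)) ->
  is_ideal I.
Proof. by move=> I0 I1 Iadd Imul; split; [exists 0 | split; [exists 1 |]]. Qed.

Lemma ideal_prod_mem {I n} (c : 'I_n -> R) j :
  is_ideal I -> I (c j) -> I (\prod_(k < n) c k).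
Proof. by move=> hI Icj; rewrite (bigD1 j) //= mulrC; exact: ideal_mul. Qed.

Lemma ideal_sum_mul {I} (s : seq (R * R)) :
  is_ideal I -> (forall p, p \in s -> I p.2) -> I (\sum_(p <- s) p.1 * p.2).
Proof.
move=> hI; elim: s => [|p s IHs] Is; first by rewrite big_nil; exact: ideal0.
rewrite big_cons; apply: ideal_add => //.
  by apply: ideal_mul => //; apply: Is; exact: mem_head.
by apply: IHs => q qs; apply: Is; rewrite inE qs orbT.
Qed.

Lemma ideal_bigcup_chain (T : Type) (K : set T) (J : T -> set R) :
  K !=set0 -> (forall k, K k -> is_ideal (J k)) ->
  (forall k l, K k -> K l -> J k `<=` J l \/ J l `<=` J k) ->
  is_ideal (\bigcup_(k in K) J k).
Proof.
move=> [k0 Kk0] Kid Ktot; apply: is_ideal_intro.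
- by exists k0 => //; exact: ideal0 (Kid k0 Kk0).
- by case=> k Kk; apply: ideal_not1 (Kid k Kk).
- move=> x y [k Kk Jx] [l Kl Jy].
  have [kl|lk] := Ktot k l Kk Kl.
  + by exists l => //; apply: ideal_add (Kid l Kl) (kl _ Jx) Jy.
  + by exists k => //; apply: ideal_add (Kid k Kk) Jx (lk _ Jy).
- by move=> r y [k Kk Jy]; exists k => //; exact: ideal_mul (Kid k Kk) Jy.
Qed.

(* Zorn is applied to the sets J with I `|` J an ideal, so that the empty
   chain needs no special treatment. *)
Lemma ideal_sub_maximal {I} :
  is_ideal I -> exists2 M, is_maximal_ideal M & I `<=` M.
Proof.
move=> hI.
have [|A [hIA Amax]] := @Zorn_bigcup R [set J | is_ideal (I `|` J)].
  move=> F FP Ftot; have [->|/set0P F0] := eqVneq F set0.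
    by rewrite /= bigcup_set0 setU0.
  rewrite /= -bigcupUr //; apply: ideal_bigcup_chain => // X Y FX FY.
  by case: (Ftot X Y FX FY) => [XY|YX]; [left | right]; exact: setUS.
exists (I `|` A) => //; split => // J hJ IAJ.
have IJ : I `|` J = J by apply/setUidPr/(subset_trans _ IAJ)/subsetUl.
have AJ : A `<=` J := subset_trans (@subsetUr _ I A) IAJ.
have JA : J `<=` A.
  by apply: contrapT => nJA; apply: (Amax J); [split | rewrite /= IJ].
by rewrite -IJ; congr (_ `|` _); apply/seteqP.
Qed.

Lemma maximal_ideal_comax {M a} : is_maximal_ideal M -> ~ M a ->
  exists m r, M m /\ 1 = m + r * a.
Proof.
move=> [hM Mmax] Ma.
pose J := [set y | exists m r, M m /\ y = m + r * a].
apply: contrapT => nJ1.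
have hJ : is_ideal J.
  apply: is_ideal_intro => //.
  - by exists 0, 0; rewrite mul0r addr0; split => //; exact: ideal0.
  - move=> _ _ [m1 [r1 [Mm1 ->]]] [m2 [r2 [Mm2 ->]]].
    exists (m1 + m2), (r1 + r2); split; first exact: ideal_add.
    by rewrite mulrDl addrACA.
  - move=> r _ [m [r1 [Mm ->]]]; exists (r * m), (r * r1).
    by split; [exact: ideal_mul | rewrite mulrDr mulrA].
have MJ : M `<=` J by move=> m Mm; exists m, 0; rewrite mul0r addr0.
apply: Ma; rewrite -(Mmax J hJ MJ); exists 0, 1.
by rewrite mul1r add0r; split => //; exact: ideal0.
Qed.

Lemma maximal_ideal_prime {M a b} :
  is_maximal_ideal M -> ~ M a -> ~ M b -> ~ M (a * b).
Proof.
move=> hM Ma Mb Mab; apply: (ideal_not1 hM.1).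
have [m1 [r [Mm1 e1]]] := maximal_ideal_comax hM Ma.
have [m2 [s [Mm2 e2]]] := maximal_ideal_comax hM Mb.
have -> : 1 = (m2 + s * b) * m1 + r * a * m2 + r * s * (a * b).
  by rewrite (mulrC _ m1) -mulrACA -addrA -mulrDr -mulrDl -e1 -e2 mulr1.
by apply: (ideal_add hM.1); [apply: (ideal_add hM.1) | ]; exact: ideal_mul hM.1 _.
Qed.

Lemma maximal_ideal_prod_notin {M n} (c : 'I_n -> R) :
  is_maximal_ideal M -> (forall k, ~ M (c k)) -> ~ M (\prod_(k < n) c k).
Proof.
move=> hM Mc; apply: (big_ind (fun y => ~ M y)) => [|y z|k _]; last exact: Mc.
- exact: ideal_not1 hM.1.
- exact: maximal_ideal_prime.
Qed.

Definition ideal_span (S : set R) : set R :=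
  [set y | exists2 s : seq (R * R),
    (forall p, p \in s -> S p.2) & y = \sum_(p <- s) p.1 * p.2].

Lemma ideal_span_one (S : set R) :
  (forall M, is_maximal_ideal M -> exists2 c, S c & ~ M c) -> ideal_span S 1.
Proof.
move=> SM; apply: contrapT => span1.
have hspan : is_ideal (ideal_span S).
  apply: is_ideal_intro => //.
  - by exists [::] => //; rewrite big_nil.
  - move=> _ _ [s1 Ss1 ->] [s2 Ss2 ->]; exists (s1 ++ s2); last by rewrite big_cat.
    by move=> p; rewrite mem_cat => /orP[/Ss1|/Ss2].
  - move=> r _ [s Ss ->]; exists [seq (r * p.1, p.2) | p <- s].
      by move=> _ /mapP[p ps ->]; exact: Ss ps.
    by rewrite big_map mulr_sumr; apply: eq_bigr => p _; rewrite mulrA.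
have [N hN spanN] := ideal_sub_maximal hspan.
have [c Sc Nc] := SM N hN; apply: Nc; apply: spanN.
exists [:: (1, c)]; last by rewrite big_seq1 mul1r.
by move=> p; rewrite inE => /eqP ->.
Qed.

Lemma ideal_sum_one_notin {I} {s : seq (R * R)} :
  is_ideal I -> 1 = \sum_(p <- s) p.1 * p.2 -> exists2 p, p \in s & ~ I p.2.
Proof.
move=> hI s1; apply: contrapT => nIs; apply: (ideal_not1 hI).
rewrite s1; apply: ideal_sum_mul => // p ps.
by apply: contrapT => Ip; apply: nIs; exists p.
Qed.

End Ideals.

Section IsekiTopology.
Context {R : comPzSemiRingType} (sigma : set (set R)).
Hypothesis sigma_ideal : forall x, sigma x -> is_ideal x.

Definition avoiding (c : R) : set (set R) := [set x | sigma x /\ ~ x c].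

Lemma basic_open_avoiding {B M} : basic_open sigma B -> is_maximal_ideal M ->
  B M -> exists2 c, ~ M c & avoiding c `<=` B.
Proof.
move=> [n [a [_ ->]]] hM [sM aM].
have /choice[c ac] : forall j, exists c, a j c /\ ~ M c.
  move=> j; apply: contrapT => nc; apply: (aM j); split => // y ajy.
  by apply: contrapT => My; apply: nc; exists y.
exists (\prod_(j < n) c j)%R.
  by apply: (maximal_ideal_prod_notin c hM) => j; exact: (ac j).2.
move=> x [sx xc]; split => // j [_ ajx]; apply: xc.
by apply: (ideal_prod_mem c j (sigma_ideal x sx)); apply: ajx; exact: (ac j).1.
Qed.

Lemma ideal_open_avoiding {U M} : ideal_open sigma U -> is_maximal_ideal M ->
  U M -> exists2 c, ~ M c & avoiding c `<=` U.
Proof.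
move=> [F [FB ->]] hM [B FB' BM].
have [c Mc cB] := basic_open_avoiding (FB B FB') hM BM.
by exists c => // x /cB Bx; exists B.
Qed.

End IsekiTopology.

Theorem theorem3p3 (R : comPzSemiRingType) (sigma : set (set R))
  (hideal : forall x, sigma x -> is_ideal x)
  (hmax : forall M, is_maximal_ideal M -> sigma M) :
  iseki_quasi_compact sigma.
Proof.
move=> I U Uo cov.
pose S := [set c | exists i, avoiding sigma c `<=` U i].
have [s sS s1] : ideal_span S 1%R.
  apply: ideal_span_one => M hM; have [i _ UiM] := cov M (hmax M hM).
  have [c Mc cU] := ideal_open_avoiding _ hideal (Uo i) hM UiM.
  by exists c => //; exists i.
have /choice[f fU] :
    forall k, exists i, avoiding sigma (tnth (in_tuple s) k).2 `<=` U i.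
  by move=> k; apply: sS; exact: mem_tnth.
exists (size s), f => x sx.
have [p ps xp] := ideal_sum_one_notin (hideal x sx) s1.
have [k pk] := tnthP (in_tuple s) p ps.
by exists k => //; apply: fU; rewrite -pk.
Qed.
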